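(* There is a constant $c$ such that for all binary strings $x,y$, $\mathrm{KP}(x\mid y)\le \min\{\mathrm{KP}(q) : [q](y)=x\}+c$. However, the difference $\min\{\mathrm{KP}(q) : [q](y)=x\}-\mathrm{KP}(x\mid y)$ is unbounded (over all pairs $x,y$).
   Context: A computable partial function $U(p,x)$ is prefix-free (in $p$) if for every $x$ the set of $p$ with $U(p,x)$ defined contains no string together with a proper prefix of it. $\mathrm{KP}(y\mid x)=\min\{|p|: U(p,x)=y\}$ for a prefix-free $U$ that is optimal (minimal up to an additive constant among prefix-free computable partial functions); the unconditional prefix complexity $\mathrm{KP}(q)$ is defined analogously with machines without a second argument. $[q](x)$ denotes the output of program $q$ on input $x$ in a fixed programming language (a computable numbering of all computable partial functions of one string argument with the $s$-$m$-$n$/Gödel property, i.e. programs in any other such language can be computably translated into it). *)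

From mathcomp Require Import all_boot.
From Stdlib Require Import ClassicalEpsilon.
Set Implicit Arguments. Unset Strict Implicit. Unset Printing Implicit Defensive.

(* Model of computation: register (Minsky) machines on nat.            *)
Inductive instr := INC of nat | DEC of nat & nat.

Definition regs := nat -> nat.
Definition upd (s : regs) (r v : nat) : regs := fun i => if i == r then v else s i.

Fixpoint run (P : seq instr) (fuel pc : nat) (s : regs) : option nat :=
  match fuel with
  | 0 => None
  | k.+1 =>
    if size P <= pc then Some (s 0)
    else match nth (INC 0) P pc with
         | INC r => run P k pc.+1 (upd s r (s r).+1)
         | DEC r j => if s r == 0 then run P k j s
                      else run P k pc.+1 (upd s r (s r).-1)
         end
  end.

Definition init (n : nat) : regs := fun i => if i == 0 then n else 0.

Definition halts_with (P : seq instr) (n m : nat) : Prop :=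
  exists fuel, run P fuel 0 (init n) = Some m.

(* bijective encoding of binary strings by naturals *)
Fixpoint enc (s : seq bool) : nat :=
  match s with
  | [::] => 0
  | b :: s' => (enc s').*2 + (if b then 2 else 1)
  end.

(* Cantor pairing nat * nat -> nat (a bijection) *)
Definition pairn (a b : nat) : nat := ((a + b) * (a + b).+1)./2 + b.

Definition computable1 (f : seq bool -> option (seq bool)) : Prop :=
  exists P, forall x y, f x = Some y <-> halts_with P (enc x) (enc y).

Definition computable2 (f : seq bool -> seq bool -> option (seq bool)) : Prop :=
  exists P, forall p x y,
    f p x = Some y <-> halts_with P (pairn (enc p) (enc x)) (enc y).

Definition prefix_free2 (U : seq bool -> seq bool -> option (seq bool)) : Prop :=
  forall x p p', U p x <> None -> U p' x <> None -> prefix p p' -> p = p'.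

Definition prefix_free1 (V : seq bool -> option (seq bool)) : Prop :=
  forall p p', V p <> None -> V p' <> None -> prefix p p' -> p = p'.

(* optimality: minimal up to an additive constant among prefix-free
   computable partial functions (KP_U <= KP_U' + c, written out) *)
Definition optimal2 (U : seq bool -> seq bool -> option (seq bool)) : Prop :=
  [/\ computable2 U, prefix_free2 U &
   forall U', computable2 U' -> prefix_free2 U' ->
     exists c, forall p' x y, U' p' x = Some y ->
       exists p, U p x = Some y /\ size p <= size p' + c].

Definition optimal1 (V : seq bool -> option (seq bool)) : Prop :=
  [/\ computable1 V, prefix_free1 V &
   forall V', computable1 V' -> prefix_free1 V' ->
     exists c, forall p' y, V' p' = Some y ->
       exists p, V p = Some y /\ size p <= size p' + c].

(* programming language [q](x): a computable numbering of computable partial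
   functions with the Goedel (s-m-n / acceptability) property: every other
   computable numbering computably translates into it *)
Definition goedel_numbering (num : seq bool -> seq bool -> option (seq bool)) : Prop :=
  computable2 num /\
  forall num', computable2 num' ->
    exists t : seq bool -> seq bool,
      computable1 (fun q => Some (t q)) /\ forall q x, num (t q) x = num' q x.

(* classical minimum of a set of naturals (meaningful when nonempty) *)
Definition minP (P : nat -> Prop) : nat :=
  epsilon (inhabits 0) (fun n => P n /\ forall m, P m -> n <= m).

Definition KPc (U : seq bool -> seq bool -> option (seq bool)) (x y : seq bool) : nat :=
  minP (fun n => exists p, size p = n /\ U p y = Some x).

Definition KPu (V : seq bool -> option (seq bool)) (q : seq bool) : nat :=
  minP (fun n => exists r, size r = n /\ V r = Some q).

Definition KPprog (V : seq bool -> option (seq bool))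
    (num : seq bool -> seq bool -> option (seq bool)) (x y : seq bool) : nat :=
  minP (fun n => exists q, num q y = Some x /\ KPu V q = n).

(* If r is a shortest description of a shortest program q with [q](y) = x, then r
   describes x given y for the prefix-free machine (r, y) |-> [V r](y), so optimality of U
   gives KP(x | y) <= |r| + c.
   Conversely, the prefix-free machine (p, y) |-> p, defined when |p| = enc y, gives
   KP(x | y_n) <= n + c for each of the 2^n strings x of length n, where enc y_n = n. If the
   difference were bounded by d, every such x would have a V-description of length at most
   n + c + d, and distinct x have distinct descriptions. The prefix-free domain of V would
   then contain 2^n strings of length at most n + c + d for every n, contradicting Kraft's
   inequality.
   Computability of the auxiliary machines is obtained by compiling a small structured
   language with subroutine calls into register machines. *)

From Stdlib Require Import ClassicalEpsilon Classical FunctionalExtensionality Setoid.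
From mathcomp Require Import all_boot zify.
Set Implicit Arguments. Unset Strict Implicit. Unset Printing Implicit Defensive.

(** * Register machines *)

Definition conf := (nat * regs)%type.

Definition step (Q : seq instr) (c : conf) : conf :=
  let: (pc, s) := c in
  if size Q <= pc then (pc, s) else
  match nth (INC 0) Q pc with
  | INC r => (pc.+1, upd s r (s r).+1)
  | DEC r j => if s r == 0 then (j, s) else (pc.+1, upd s r (s r).-1)
  end.
Arguments step : simpl never.

Definition halted (Q : seq instr) (c : conf) := size Q <= c.1.

Lemma run_step Q f pc s : run Q f.+1 pc s =
  if size Q <= pc then Some (s 0) else let: (pc', s') := step Q (pc, s) in run Q f pc' s'.
Proof.
rewrite /= /step; case: ifP => // _.
by case: nth => [r|r j] //; case: ifP.
Qed.

Lemma step_halted Q c : halted Q c -> step Q c = c.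
Proof. by case: c => pc s; rewrite /halted /step /= => ->. Qed.

Lemma iter_step_halted Q c k : halted Q c -> iter k (step Q) c = c.
Proof. by move=> h; elim: k => //= k ->; rewrite step_halted. Qed.

Lemma iter_step_halted_le Q c k k' : k <= k' -> halted Q (iter k (step Q) c) ->
  iter k' (step Q) c = iter k (step Q) c.
Proof. by move=> le h; rewrite -(subnK le) iterD iter_step_halted. Qed.

Lemma halted_iterS Q pc s k : pc < size Q -> halted Q (iter k (step Q) (pc, s)) ->
  exists2 k', k = k'.+1 & halted Q (iter k' (step Q) (step Q (pc, s))).
Proof.
case: k => [|k'] hpc; first by rewrite /halted /= leqNgt hpc.
by rewrite iterSr => h; exists k'.
Qed.

Lemma halted_iter_sub Q c c' j k : j <= k -> iter j (step Q) c = c' ->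
  halted Q (iter k (step Q) c) -> halted Q (iter (k - j) (step Q) c').
Proof. by move=> le <-; rewrite -iterD subnK. Qed.

Lemma run_iter Q pc s m : (exists f, run Q f pc s = Some m) <->
  exists k, halted Q (iter k (step Q) (pc, s)) /\ (iter k (step Q) (pc, s)).2 0 = m.
Proof.
split.
- case=> f; elim: f pc s => [//|f IH] pc s.
  rewrite run_step; case: ifP => h; first by case=> <-; exists 0.
  case E: (step Q (pc, s)) => [pc' s'] /IH [k [h1 h2]].
  by exists k.+1; rewrite iterSr E.
- case=> k; elim: k pc s => [|k IH] pc s.
    by case=> [h <-]; exists 1; rewrite run_step; move: h; rewrite /halted /= => ->.
  case h: (size Q <= pc).
    by rewrite iter_step_halted // => -[_ <-]; exists 1; rewrite run_step h.
  rewrite iterSr; case E: (step Q (pc, s)) => [pc' s'] /IH [f hf].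
  by exists f.+1; rewrite run_step h E.
Qed.

Definition terminates (Q : seq instr) (s u : regs) :=
  exists k, halted Q (iter k (step Q) (0, s)) /\ (iter k (step Q) (0, s)).2 = u.

Lemma terminates_det Q s u1 u2 : terminates Q s u1 -> terminates Q s u2 -> u1 = u2.
Proof.
case=> k1 [h1 <-] [k2 [h2 <-]].
by case: (leqP k1 k2) => [le|/ltnW le]; rewrite (iter_step_halted_le le).
Qed.

Lemma halts_withE P n m : halts_with P n m <-> exists2 u, terminates P (init n) u & u 0 = m.
Proof.
rewrite /halts_with run_iter; split.
- by case=> k [h e]; exists (iter k (step P) (0, init n)).2 => //; exists k.
- by case=> u [k [h e]] <-; exists k; rewrite e.
Qed.

(** * Structured programs and their compilation *)

Inductive cmd :=
| CInc of nat
| CSeq of cmd & cmd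
| CWhile of nat & cmd
| CIf of nat & cmd & cmd
| CCall of seq instr & nat & nat.

(* Well-formed commands never write register [zreg], so compiled code can use
   [DEC zreg j] as an unconditional jump. *)
Definition zreg := 1.

Fixpoint wf c := match c with
  | CInc r => r != zreg
  | CSeq c1 c2 => wf c1 && wf c2
  | CWhile r c => (r != zreg) && wf c
  | CIf r c1 c2 => [&& r != zreg, wf c1 & wf c2]
  | CCall _ m k => (0 < m) && (zreg < k)
  end.

Fixpoint len c := match c with
  | CInc _ => 1
  | CSeq c1 c2 => len c1 + len c2
  | CWhile _ c => (len c).+2
  | CIf _ c1 c2 => (len c1 + len c2).+2
  | CCall P _ _ => size P
  end.

(* Jumps out of [P] (of size [n]) are redirected to the end of the block. *)
Definition reloc o n m k (i : instr) := match i with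
  | INC r => INC (m * r + k)
  | DEC r j => DEC (m * r + k) (o + minn j n)
  end.

Fixpoint compile c o := match c with
  | CInc r => [:: INC r]
  | CSeq c1 c2 => compile c1 o ++ compile c2 (o + len c1)
  | CWhile r c => DEC r (o + (len c).+2) :: compile c o.+1 ++ [:: DEC zreg o]
  | CIf r c1 c2 => DEC r (o + (len c2).+2) :: compile c2 o.+1 ++
      DEC zreg (o + (len c1 + len c2).+2) :: compile c1 (o + (len c2).+2)
  | CCall P m k => map (reloc o (size P) m k) P
  end.

Lemma size_compile c o : size (compile c o) = len c.
Proof.
elim: c o => //= [c1 IH1 c2 IH2|r c IH|r c1 IH1 c2 IH2|P m k] o.
- by rewrite size_cat IH1 IH2.
- by rewrite size_cat IH addn1.
- by rewrite size_cat /= IH1 IH2; lia.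
- by rewrite size_map.
Qed.

Definition window m k (s : regs) : regs := fun i => s (m * i + k).

Definition embed m k (s u : regs) : regs := fun j =>
  if (k <= j) && ((j - k) %% m == 0) then u ((j - k) %/ m) else s j.

Inductive exec : cmd -> regs -> regs -> Prop :=
| ExecInc r s : exec (CInc r) s (upd s r (s r).+1)
| ExecSeq c1 c2 s u t : exec c1 s u -> exec c2 u t -> exec (CSeq c1 c2) s t
| ExecWhile0 r c s : s r = 0 -> exec (CWhile r c) s s
| ExecWhileS r c s u t : s r <> 0 -> exec c (upd s r (s r).-1) u ->
    exec (CWhile r c) u t -> exec (CWhile r c) s t
| ExecIf0 r c1 c2 s t : s r = 0 -> exec c1 s t -> exec (CIf r c1 c2) s t
| ExecIfS r c1 c2 s t : s r <> 0 -> exec c2 (upd s r (s r).-1) t -> exec (CIf r c1 c2) s t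
| ExecCall P m k s u : terminates P (window m k s) u -> exec (CCall P m k) s (embed m k s u).

Lemma upd_eq s r v : upd s r v r = v.
Proof. by rewrite /upd eqxx. Qed.

Lemma upd_neq s r v i : i != r -> upd s r v i = s i.
Proof. by rewrite /upd => /negbTE ->. Qed.

Ltac rewrite_upd :=
  repeat (rewrite upd_eq || (rewrite upd_neq; last by (done || rewrite eq_sym; done))).

Lemma exec_zreg c s t : exec c s t -> wf c -> t zreg = s zreg.
Proof.
elim=> //= {c s t}.
- by move=> r s h; rewrite_upd.
- by move=> c1 c2 s u t _ IH1 _ IH2 /andP[w1 w2]; rewrite IH2 // IH1.
- by move=> r c s u t _ _ IH1 _ IH2 /andP[wr wc]; rewrite IH2 /= ?wr // IH1 //; rewrite_upd.
- by move=> r c1 c2 s t _ _ IH /and3P[_ w1 _]; rewrite IH.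
- by move=> r c1 c2 s t _ _ IH /and3P[wr _ w2]; rewrite IH //; rewrite_upd.
- by move=> P m k s u _ /andP[_ kz]; rewrite /embed leqNgt kz.
Qed.

Definition code_at (Q : seq instr) o (A : seq instr) :=
  forall i, i < size A -> nth (INC 0) Q (o + i) = nth (INC 0) A i.

Lemma code_at_catl Q o A B : code_at Q o (A ++ B) -> code_at Q o A.
Proof. by move=> h i hi; rewrite h ?nth_cat ?hi // size_cat; lia. Qed.

Lemma code_at_catr Q o A B : code_at Q o (A ++ B) -> code_at Q (o + size A) B.
Proof.
move=> h i hi; rewrite -addnA h ?size_cat; last by lia.
by rewrite nth_cat ltnNge leq_addr /= addKn.
Qed.

Lemma code_at_cons Q o a A : code_at Q o (a :: A) -> nth (INC 0) Q o = a /\ code_at Q o.+1 A.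
Proof.
move=> h; split; first by move: (h 0 isT); rewrite addn0.
by move=> i hi; rewrite addSnnS h.
Qed.

Definition placed Q o c := code_at Q o (compile c o).

Lemma placed_seq Q o c1 c2 : placed Q o (CSeq c1 c2) ->
  placed Q o c1 /\ placed Q (o + len c1) c2.
Proof.
move=> h; split; first exact: code_at_catl h.
by have := code_at_catr h; rewrite size_compile.
Qed.

Lemma placed_while Q o r c : placed Q o (CWhile r c) ->
  [/\ nth (INC 0) Q o = DEC r (o + (len c).+2), placed Q o.+1 c
    & nth (INC 0) Q (o.+1 + len c) = DEC zreg o].
Proof.
case/code_at_cons=> hd h; split => //; first exact: code_at_catl h.
by have /code_at_cons[] := code_at_catr h; rewrite size_compile.
Qed.

Lemma placed_if Q o r c1 c2 : placed Q o (CIf r c1 c2) ->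
  [/\ nth (INC 0) Q o = DEC r (o + (len c2).+2), placed Q o.+1 c2,
      nth (INC 0) Q (o.+1 + len c2) = DEC zreg (o + (len c1 + len c2).+2)
    & placed Q (o + (len c2).+2) c1].
Proof.
case/code_at_cons=> hd h; have /code_at_cons[mid h1] := code_at_catr h.
rewrite size_compile in mid h1; split => //; first exact: code_at_catl h.
by rewrite (_ : (o.+1 + len c2).+1 = o + (len c2).+2) in h1 => //; lia.
Qed.

Lemma step_inc Q pc s r : pc < size Q -> nth (INC 0) Q pc = INC r ->
  step Q (pc, s) = (pc.+1, upd s r (s r).+1).
Proof. by rewrite /step ltnNge => /negbTE -> ->. Qed.

Lemma step_dec0 Q pc s r j : pc < size Q -> nth (INC 0) Q pc = DEC r j -> s r = 0 ->
  step Q (pc, s) = (j, s).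
Proof. by rewrite /step ltnNge => /negbTE -> -> ->. Qed.

Lemma step_decS Q pc s r j : pc < size Q -> nth (INC 0) Q pc = DEC r j -> s r <> 0 ->
  step Q (pc, s) = (pc.+1, upd s r (s r).-1).
Proof. by rewrite /step ltnNge => /negbTE -> -> /eqP/negbTE ->. Qed.

Lemma embed_at m k s u r : 0 < m -> embed m k s u (m * r + k) = u r.
Proof. by move=> m0; rewrite /embed leq_addl addnK modnMr eqxx mulKn. Qed.

Lemma embed_out m k s u j : ~~ ((k <= j) && ((j - k) %% m == 0)) -> embed m k s u j = s j.
Proof. by rewrite /embed => /negbTE ->. Qed.

Lemma embed_index m k j : 0 < m -> (k <= j) && ((j - k) %% m == 0) ->
  j = m * ((j - k) %/ m) + k.
Proof.
move=> m0 /andP[h1 /eqP h2].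
by rewrite mulnC -[(j - k) %/ m * m]addn0 -h2 -divn_eq subnK.
Qed.

Lemma embed_upd m k s u r v : 0 < m ->
  upd (embed m k s u) (m * r + k) v = embed m k s (upd u r v).
Proof.
move=> m0; apply: functional_extensionality => j.
rewrite /upd /embed; case: eqP => [->|ne].
  by rewrite leq_addl addnK modnMr eqxx /= mulKn // eqxx.
case: ifP => // h; case: eqP => // e; case: ne.
by rewrite {1}(embed_index m0 h) e.
Qed.

Lemma embed_window m k s : 0 < m -> embed m k s (window m k s) = s.
Proof.
move=> m0; apply: functional_extensionality => j; rewrite /embed /window.
by case: ifP => // h; rewrite -(embed_index m0 h).
Qed.

Lemma first_halt P u : (exists n, halted P (iter n (step P) (0, u))) ->
  exists i0, halted P (iter i0 (step P) (0, u)) /\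
    forall i, i < i0 -> ~~ halted P (iter i (step P) (0, u)).
Proof.
move=> ex; case: (ex_minnP ex) => i0 h hmin; exists i0; split => // i hi.
by apply/negP => /hmin; rewrite leqNgt hi.
Qed.

Section CallSimulation.
Variables (Q P : seq instr) (o m k : nat) (s : regs).
Hypotheses (m_gt0 : 0 < m) (pl : placed Q o (CCall P m k)) (fits : o + size P <= size Q).

Lemma step_call pc u : pc < size P ->
  step Q (o + pc, embed m k s u) =
  (o + minn (step P (pc, u)).1 (size P), embed m k s (step P (pc, u)).2).
Proof.
move=> hpc.
have hn : nth (INC 0) Q (o + pc) = reloc o (size P) m k (nth (INC 0) P pc).
  by rewrite pl /= ?(nth_map (INC 0)) ?size_map.
have hS : minn pc.+1 (size P) = pc.+1 by apply/minn_idPl.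
rewrite /step !ifN -?ltnNge //; last by lia.
rewrite hn; case: (nth (INC 0) P pc) => [r|r j] /=.
  by rewrite embed_at // embed_upd // hS addnS.
by rewrite embed_at //; case: ifP => // _ /=; rewrite embed_upd // hS addnS.
Qed.

Lemma iter_step_call u j : (forall i, i < j -> ~~ halted P (iter i (step P) (0, u))) ->
  iter j (step Q) (o, embed m k s u) =
  (o + minn (iter j (step P) (0, u)).1 (size P), embed m k s (iter j (step P) (0, u)).2).
Proof.
elim: j => [|j IH] h /=; first by rewrite min0n addn0.
rewrite IH; last by move=> i hi; apply: h; lia.
have := h j (ltnSn j); rewrite /halted -ltnNge.
case: (iter j (step P) (0, u)) => pc v /= hpc.
by rewrite (minn_idPl (ltnW hpc)); exact: step_call.
Qed.

Lemma iter_step_call_halted u j : halted P (iter j (step P) (0, u)) ->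
  (forall i, i < j -> ~~ halted P (iter i (step P) (0, u))) ->
  iter j (step Q) (o, embed m k s u) = (o + size P, embed m k s (iter j (step P) (0, u)).2).
Proof. by move=> hj hmin; rewrite iter_step_call // (minn_idPr hj). Qed.

End CallSimulation.

Definition reaches Q o c s t := exists j, iter j (step Q) (o, s) = (o + len c, t).

Lemma reaches_seq Q o c1 c2 s u t :
  reaches Q o c1 s u -> reaches Q (o + len c1) c2 u t -> reaches Q o (CSeq c1 c2) s t.
Proof. by case=> j1 e1 [j2 e2]; exists (j2 + j1); rewrite iterD e1 e2 addnA. Qed.

Lemma reaches_while0 Q o r c s : placed Q o (CWhile r c) -> o < size Q -> s r = 0 ->
  reaches Q o (CWhile r c) s s.
Proof. by case/placed_while=> hd _ _ ho hr; exists 1; rewrite /= (step_dec0 ho hd hr). Qed.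

Lemma reaches_whileS Q o r c s u t :
  placed Q o (CWhile r c) -> o + len (CWhile r c) <= size Q -> s r <> 0 -> u zreg = 0 ->
  reaches Q o.+1 c (upd s r (s r).-1) u -> reaches Q o (CWhile r c) u t ->
  reaches Q o (CWhile r c) s t.
Proof.
case/placed_while=> hd _ tl /= sz hr zu [j1 e1] [j3 e3].
exists (j3 + (1 + (j1 + 1))); rewrite !iterD /= (step_decS _ hd hr); last by lia.
by rewrite e1 (step_dec0 _ tl zu) ?e3 //; lia.
Qed.

Lemma reaches_if0 Q o r c1 c2 s t : placed Q o (CIf r c1 c2) -> o < size Q -> s r = 0 ->
  reaches Q (o + (len c2).+2) c1 s t -> reaches Q o (CIf r c1 c2) s t.
Proof.
case/placed_if=> hd _ _ _ ho hr [j1 e1]; exists (j1 + 1).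
by rewrite iterD /= (step_dec0 ho hd hr) e1 /=; congr pair; lia.
Qed.

Lemma reaches_ifS Q o r c1 c2 s t :
  placed Q o (CIf r c1 c2) -> o + len (CIf r c1 c2) <= size Q -> s r <> 0 -> t zreg = 0 ->
  reaches Q o.+1 c2 (upd s r (s r).-1) t -> reaches Q o (CIf r c1 c2) s t.
Proof.
case/placed_if=> hd _ mid _ /= sz hr zt [j2 e2]; exists (1 + (j2 + 1)).
by rewrite !iterD /= (step_decS _ hd hr) ?e2 ?(step_dec0 _ mid zt) //; lia.
Qed.

Lemma reaches_call Q o P m k s u : 0 < m -> placed Q o (CCall P m k) ->
  o + size P <= size Q -> terminates P (window m k s) u ->
  reaches Q o (CCall P m k) s (embed m k s u).
Proof.
move=> m0 pl sz [n [hn <-]].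
have [i0 [hi0 hmin]] := first_halt (ex_intro _ n hn).
have le : i0 <= n by rewrite leqNgt; apply/negP => /hmin; rewrite hn.
exists i0; rewrite -{1}(embed_window k s m0) (iter_step_call_halted s m0 pl sz hi0 hmin).
by rewrite (iter_step_halted_le le hi0).
Qed.

Lemma compile_complete Q c s t : exec c s t -> forall o, wf c -> s zreg = 0 ->
  placed Q o c -> o + len c <= size Q -> reaches Q o c s t.
Proof.
elim=> {c s t} /=.
- move=> r s o _ _ pl sz; have [hd _] := code_at_cons pl.
  by exists 1; rewrite /= (step_inc _ _ hd) ?addn1 //; lia.
- move=> c1 c2 s u t h1 IH1 _ IH2 o /andP[w1 w2] z /placed_seq[p1 p2] sz.
  apply: reaches_seq (IH1 _ w1 z p1 _) (IH2 _ w2 _ p2 _); try lia.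
  by rewrite (exec_zreg h1 w1).
- by move=> r c s hr o _ _ pl sz; apply: reaches_while0 => //; lia.
- move=> r c s u t hr hb IHb _ IHw o /andP[wr wc] z pl sz.
  have [_ pb _] := placed_while pl.
  have z1 : upd s r (s r).-1 zreg = 0 by rewrite_upd.
  have zu : u zreg = 0 by rewrite (exec_zreg hb wc).
  have wW : wf (CWhile r c) by rewrite /= wr.
  by apply: (reaches_whileS pl sz hr zu (IHb _ wc z1 pb _) (IHw _ wW zu pl sz)); lia.
- move=> r c1 c2 s t hr _ IH o /and3P[_ w1 _] z pl sz.
  have [_ _ _ p1] := placed_if pl.
  by apply: reaches_if0 (IH _ w1 z p1 _) => //; lia.
- move=> r c1 c2 s t hr h2 IH o /and3P[wr _ w2] z pl sz.
  have [_ p2 _ _] := placed_if pl.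
  have zt : t zreg = 0 by rewrite (exec_zreg h2 w2); rewrite_upd.
  by apply: reaches_ifS (IH _ w2 _ p2 _) => //; [rewrite_upd | lia].
- by move=> P m k s u hu o /andP[m0 _] _ pl sz; apply: reaches_call.
Qed.

Definition sound_at Q o c := forall s k, s zreg = 0 -> halted Q (iter k (step Q) (o, s)) ->
  exists j t, [/\ j <= k, iter j (step Q) (o, s) = (o + len c, t) & exec c s t].

Lemma sound_inc Q o r : placed Q o (CInc r) -> o < size Q -> sound_at Q o (CInc r).
Proof.
move=> /code_at_cons[hd _] ho s k _ h; have [k' -> _] := halted_iterS ho h.
exists 1, (upd s r (s r).+1); split => //; last exact: ExecInc.
by rewrite /= (step_inc _ ho hd) addn1.
Qed.

Lemma sound_seq Q o c1 c2 : wf c1 -> sound_at Q o c1 -> sound_at Q (o + len c1) c2 ->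
  sound_at Q o (CSeq c1 c2).
Proof.
move=> w1 IH1 IH2 s k z h.
have [j1 [u [l1 e1 h1]]] := IH1 s k z h.
have zu : u zreg = 0 by rewrite (exec_zreg h1 w1).
have [j2 [t [l2 e2 h2]]] := IH2 u (k - j1) zu (halted_iter_sub l1 e1 h).
exists (j2 + j1), t; split; [lia | by rewrite iterD e1 e2 addnA | exact: ExecSeq h1 h2].
Qed.

Lemma sound_while Q o r c : r != zreg -> wf c -> placed Q o (CWhile r c) ->
  o + len (CWhile r c) <= size Q -> sound_at Q o.+1 c -> sound_at Q o (CWhile r c).
Proof.
move=> wr wc pl /= sz IHc s k; have [hd _ tl] := placed_while pl.
have ho : o < size Q by lia.
have hb : o.+1 + len c < size Q by lia.
elim/ltn_ind: k s => k IHk s z h.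
have [k' ek h1] := halted_iterS ho h.
have [hr|/eqP hr] := eqVneq (s r) 0.
  by exists 1, s; split; [lia | rewrite /= (step_dec0 ho hd hr) | exact: ExecWhile0].
rewrite (step_decS ho hd hr) in h1.
have z1 : upd s r (s r).-1 zreg = 0 by rewrite_upd.
have [j1 [u [l1 e1 hbody]]] := IHc _ _ z1 h1.
have zu : u zreg = 0 by rewrite (exec_zreg hbody wc).
have [k'' ek' h3] := halted_iterS hb (halted_iter_sub l1 e1 h1).
rewrite (step_dec0 hb tl zu) in h3.
have [j3 [t [l3 e3 hw]]] := IHk k'' ltac:(lia) u zu h3.
exists (j3 + (1 + (j1 + 1))), t; split; [lia | | exact: ExecWhileS hbody hw].
by rewrite !iterD /= (step_decS ho hd hr) e1 (step_dec0 hb tl zu) e3.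
Qed.

Lemma sound_if Q o r c1 c2 : r != zreg -> wf c2 -> placed Q o (CIf r c1 c2) ->
  o + len (CIf r c1 c2) <= size Q -> sound_at Q (o + (len c2).+2) c1 -> sound_at Q o.+1 c2 ->
  sound_at Q o (CIf r c1 c2).
Proof.
move=> wr w2 pl /= sz IH1 IH2 s k z h; have [hd _ mid _] := placed_if pl.
have ho : o < size Q by lia.
have [k' ek h1] := halted_iterS ho h.
have [hr|/eqP hr] := eqVneq (s r) 0.
  rewrite (step_dec0 ho hd hr) in h1.
  have [j1 [t [l1 e1 hc]]] := IH1 s k' z h1.
  exists (j1 + 1), t; split; [lia | | exact: ExecIf0].
  by rewrite iterD /= (step_dec0 ho hd hr) e1; congr pair; lia.
rewrite (step_decS ho hd hr) in h1.
have z1 : upd s r (s r).-1 zreg = 0 by rewrite_upd.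
have [j2 [t [l2 e2 hc]]] := IH2 _ _ z1 h1.
have zt : t zreg = 0 by rewrite (exec_zreg hc w2).
have hm : o.+1 + len c2 < size Q by lia.
have [k'' ek' _] := halted_iterS hm (halted_iter_sub l2 e2 h1).
exists (1 + (j2 + 1)), t; split; [lia | | exact: ExecIfS].
by rewrite !iterD /= (step_decS ho hd hr) e2 (step_dec0 hm mid zt).
Qed.

Lemma sound_call Q o P m k : 0 < m -> placed Q o (CCall P m k) -> o + size P <= size Q ->
  sound_at Q o (CCall P m k).
Proof.
move=> m0 pl sz s K _ h; set u := window m k s.
have [[n le hn]|never] := classic (exists2 n, n <= K & halted P (iter n (step P) (0, u))).
  have [i0 [hi0 hmin]] := first_halt (ex_intro _ n hn).
  have li : i0 <= K by rewrite (leq_trans _ le) // leqNgt; apply/negP => /hmin; rewrite hn.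
  exists i0, (embed m k s (iter i0 (step P) (0, u)).2); split => //.
    by rewrite -{1}(embed_window k s m0) (iter_step_call_halted s m0 pl sz hi0 hmin).
  by apply: ExecCall; exists i0.
have nh i : i <= K -> ~~ halted P (iter i (step P) (0, u)).
  by move=> hi; apply/negP => hh; apply: never; exists i.
have nlt : forall i, i < K -> ~~ halted P (iter i (step P) (0, u)) by move=> i /ltnW; exact: nh.
have := nh K (leqnn K); rewrite /halted -ltnNge => hK.
move: h; rewrite -{1}(embed_window k s m0) (iter_step_call s m0 pl sz nlt) /halted /=.
by rewrite (minn_idPl (ltnW hK)); lia.
Qed.

Lemma compile_sound Q c o : wf c -> placed Q o c -> o + len c <= size Q -> sound_at Q o c.
Proof.
elim: c o => /= [r|c1 IH1 c2 IH2|r c IH|r c1 IH1 c2 IH2|P m k] o w pl sz.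
- exact: (sound_inc pl ltac:(lia)).
- case/andP: w => w1 w2; have [p1 p2] := placed_seq pl.
  exact: (sound_seq w1 (IH1 _ w1 p1 ltac:(lia)) (IH2 _ w2 p2 ltac:(lia))).
- case/andP: w => wr wc; have [_ pc _] := placed_while pl.
  exact: (sound_while wr wc pl sz (IH _ wc pc ltac:(lia))).
- case/and3P: w => wr w1 w2; have [_ p2 _ p1] := placed_if pl.
  exact: (sound_if wr w2 pl sz (IH1 _ w1 p1 ltac:(lia)) (IH2 _ w2 p2 ltac:(lia))).
- by case/andP: w => m0 _; exact: sound_call.
Qed.

Lemma compile_terminates c s t : wf c -> s zreg = 0 ->
  terminates (compile c 0) s t <-> exec c s t.
Proof.
move=> w z; have pl : placed (compile c 0) 0 c by move=> i _; rewrite add0n.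
have sz : 0 + len c <= size (compile c 0) by rewrite size_compile.
split.
- case=> k [h <-]; have [j [t' [l e ht]]] := compile_sound w pl sz z h.
  have hj : halted (compile c 0) (iter j (step (compile c 0)) (0, s)).
    by rewrite e /halted /= size_compile.
  by rewrite (iter_step_halted_le l hj) e.
- move/compile_complete=> /(_ _ 0 w z pl sz) [j e]; exists j.
  by rewrite e /halted /= size_compile.
Qed.

Lemma compile_halts c n m : wf c ->
  halts_with (compile c 0) n m <-> exists2 t, exec c (init n) t & t 0 = m.
Proof.
move=> w; rewrite halts_withE.
by split=> -[t h e]; exists t => //; apply/(@compile_terminates c (init n) t w).
Qed.

Lemma exec_seq_inv c1 c2 s t : exec (CSeq c1 c2) s t -> exists2 u, exec c1 s u & exec c2 u t.
Proof. by move=> H; inversion H; subst; eauto. Qed.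

Lemma exec_if_inv r c1 c2 s t : exec (CIf r c1 c2) s t ->
  (s r = 0 /\ exec c1 s t) \/ (s r <> 0 /\ exec c2 (upd s r (s r).-1) t).
Proof. by move=> H; inversion H; subst; eauto. Qed.

Lemma exec_while_inv r c s t : exec (CWhile r c) s t ->
  (s r = 0 /\ t = s) \/
  (s r <> 0 /\ exists2 u, exec c (upd s r (s r).-1) u & exec (CWhile r c) u t).
Proof. by move=> H; inversion H; subst; eauto. Qed.

Lemma exec_inc_inv r s t : exec (CInc r) s t -> t = upd s r (s r).+1.
Proof. by move=> H; inversion H. Qed.

Lemma exec_call_inv P m k s t : exec (CCall P m k) s t ->
  exists2 u, terminates P (window m k s) u & t = embed m k s u.
Proof. by move=> H; inversion H; subst; eauto. Qed.

Lemma exec_det c s t1 t2 : exec c s t1 -> exec c s t2 -> t1 = t2.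
Proof.
move=> H; elim: H t2 => {c s t1}.
- by move=> r s t2 /exec_inc_inv.
- by move=> c1 c2 s u t _ IH1 _ IH2 t2 /exec_seq_inv[u' /IH1 <- /IH2].
- by move=> r c s hr t2 /exec_while_inv[[_ ->]|[]].
- move=> r c s u t hr _ IHb _ IHw t2 /exec_while_inv[[]//|[_ [u' /IHb <-]]].
  exact: IHw.
- by move=> r c1 c2 s t hr _ IH t2 /exec_if_inv[[_ /IH]|[]].
- by move=> r c1 c2 s t hr _ IH t2 /exec_if_inv[[]|[_ /IH]].
- by move=> P m k s u hu t2 /exec_call_inv[u' /(terminates_det hu) <- ->].
Qed.

(** * Encodings *)

Fixpoint dec_fuel f n : seq bool :=
  if f is f'.+1 then (if n is n'.+1 then odd n' :: dec_fuel f' n'./2 else [::]) else [::].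

Definition dec n := dec_fuel n n.

Lemma dec_fuelK f n : n <= f -> enc (dec_fuel f n) = n.
Proof.
elim: f n => [|f IH] [|n] //= h.
rewrite IH; last by have := odd_double_half n; lia.
by have := odd_double_half n; case: (odd n) => /=; lia.
Qed.

Lemma decK n : enc (dec n) = n.
Proof. exact: dec_fuelK. Qed.

Lemma enc_inj : injective enc.
Proof.
elim=> [|b s IH] [|b' s'] //=; [by case: b'; lia | by case: b; lia | move=> e].
have hb : b = b'.
  by move: e; case: b; case: b' => //; move/(congr1 odd); rewrite !oddD !odd_double.
by subst b'; congr cons; apply: IH; move: e; case: b; lia.
Qed.

Lemma encK : cancel enc dec.
Proof. by move=> s; apply: enc_inj; rewrite decK. Qed.

Lemma enc_eq0 s : enc s = 0 -> s = [::].
Proof. by case: s => // -[] s /=; lia. Qed.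

Lemma enc_cons_pred b p : (enc (b :: p)).-1 = b + (enc p).*2.
Proof. by case: b => /=; lia. Qed.

Definition tri n := (n * n.+1)./2.

Lemma triS n : tri n.+1 = tri n + n.+1.
Proof.
rewrite /tri (_ : n.+1 * n.+2 = n * n.+1 + (n.+1).*2); last by rewrite -!mul2n; lia.
by rewrite halfD odd_double andbF doubleK.
Qed.

Lemma pairnE a b : pairn a b = tri (a + b) + b.
Proof. by []. Qed.

(* The enumeration order of Cantor's pairing. *)
Definition pair_succ (p : nat * nat) : nat * nat :=
  if p.1 is a.+1 then (a, p.2.+1) else (p.2.+1, 0).

Lemma pairn_succ a b : pairn (pair_succ (a, b)).1 (pair_succ (a, b)).2 = (pairn a b).+1.
Proof.
rewrite /pair_succ; case: a => [|a] /=; rewrite !pairnE.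
  by rewrite !addn0 !add0n triS; lia.
by rewrite (addnS a b) (addSn a b); lia.
Qed.

Lemma iter_pair_succ n a b : pairn a b = n -> iter n pair_succ (0, 0) = (a, b).
Proof.
elim: n a b => [|n IH] a b.
  rewrite pairnE; case: b => [|b]; last by rewrite addnS.
  by case: a => // a; rewrite addn0 triS addnS.
move=> e; have [a0 [b0 [<- e0]]] : exists a0 b0, pair_succ (a0, b0) = (a, b) /\ pairn a0 b0 = n.
  case: b e => [|b] e; last first.
    by exists a.+1, b; split => //; have := pairn_succ a.+1 b; rewrite /= e; case.
  case: a e => [|a] e; first by move: e; rewrite pairnE.
  by exists 0, a; split => //; have := pairn_succ 0 a; rewrite /= e; case.
by rewrite iterS (IH _ _ e0).
Qed.

(** * A library of commands *)

Definition cmove r d := CWhile r (CInc d).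

Lemma cmove_spec r d s : r != d -> exists2 t, exec (cmove r d) s t &
  [/\ t r = 0, t d = s d + s r & forall i, i != r -> i != d -> t i = s i].
Proof.
move=> ne; move Hn: (s r) => n; elim: n s Hn => [|n IH] s hs.
  by exists s; [exact: ExecWhile0 | rewrite hs addn0].
set s1 := upd (upd s r n) d (upd s r n d).+1.
have h1 : s1 r = n by rewrite /s1; rewrite_upd.
have [t ht [t1 t2 t3]] := IH s1 h1.
exists t; first by apply: ExecWhileS ht; rewrite hs //; exact: ExecInc.
split => //; first by rewrite t2 /s1; rewrite_upd; lia.
by move=> i h h'; rewrite t3 // /s1; rewrite_upd.
Qed.

Definition cmove2 r d1 d2 := CWhile r (CSeq (CInc d1) (CInc d2)).

Lemma cmove2_spec r d1 d2 s : r != d1 -> r != d2 -> d1 != d2 ->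
  exists2 t, exec (cmove2 r d1 d2) s t &
  [/\ t r = 0, t d1 = s d1 + s r, t d2 = s d2 + s r
    & forall i, i != r -> i != d1 -> i != d2 -> t i = s i].
Proof.
move=> n1 n2 n12; move Hn: (s r) => n; elim: n s Hn => [|n IH] s hs.
  by exists s; [exact: ExecWhile0 | rewrite hs !addn0].
set s0 := upd s r n; set s1 := upd s0 d1 (s0 d1).+1; set s2 := upd s1 d2 (s1 d2).+1.
have h2 : s2 r = n by rewrite /s2 /s1 /s0; rewrite_upd.
have [t ht [t1 t2 t3 t4]] := IH s2 h2.
exists t; first by apply: ExecWhileS ht; rewrite hs //; apply: ExecSeq; exact: ExecInc.
split => //; try by rewrite ?t2 ?t3 /s2 /s1 /s0; rewrite_upd; lia.
by move=> i h h' h''; rewrite t4 // /s2 /s1 /s0; rewrite_upd.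
Qed.

Definition cadd r d tmp := CSeq (cmove2 r d tmp) (cmove tmp r).

Lemma cadd_spec r d tmp s : r != d -> r != tmp -> d != tmp -> s tmp = 0 ->
  exists2 t, exec (cadd r d tmp) s t &
  [/\ t r = s r, t d = s d + s r, t tmp = 0
    & forall i, i != r -> i != d -> i != tmp -> t i = s i].
Proof.
move=> n1 n2 n3 z.
have [u hu [u1 u2 u3 u4]] := cmove2_spec s n1 n2 n3.
have [t ht [t1 t2 t3]] := cmove_spec u (ltac:(by rewrite eq_sym) : tmp != r).
exists t; first exact: ExecSeq hu ht.
split => //; first by rewrite t2 u1 u3 z.
  by rewrite (t3 d n3) ?u2 // eq_sym.
by move=> i h h' h''; rewrite t3 // u4.
Qed.

Definition ctri w d tmp := CWhile w (CSeq (CInc d) (cadd w d tmp)).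

Lemma ctri_spec w d tmp s : w != d -> w != tmp -> d != tmp -> s tmp = 0 ->
  exists2 t, exec (ctri w d tmp) s t &
  [/\ t w = 0, t d = s d + tri (s w), t tmp = 0
    & forall i, i != w -> i != d -> i != tmp -> t i = s i].
Proof.
move=> n1 n2 n3; move Hn: (s w) => n; elim: n s Hn => [|n IH] s hs z.
  by exists s; [exact: ExecWhile0 | rewrite addn0].
set s0 := upd s w n; set s1 := upd s0 d (s0 d).+1.
have z1 : s1 tmp = 0 by rewrite /s1 /s0; rewrite_upd.
have [s2 h2 [e1 e2 e3 e4]] := cadd_spec n1 n2 n3 z1.
have hw : s2 w = n by rewrite e1 /s1 /s0; rewrite_upd.
have [t ht [t1 t2 t3 t4]] := IH s2 hw e3.
exists t; first by apply: ExecWhileS ht; rewrite hs //; apply: ExecSeq h2; exact: ExecInc.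
split => //; first by rewrite t2 e2 /s1 /s0 triS; rewrite_upd; lia.
by move=> i h h' h''; rewrite t4 // e4 // /s1 /s0; rewrite_upd.
Qed.

Definition cpair_succ := CIf 2 (CSeq (cmove 5 2) (CInc 2)) (CInc 5).

Lemma cpair_succ_spec s : exists2 t, exec cpair_succ s t &
  (t 2, t 5) = pair_succ (s 2, s 5) /\ forall i, i != 2 -> i != 5 -> t i = s i.
Proof.
case E: (s 2) => [|a].
  have [u hu [u1 u2 u3]] := cmove_spec s (isT : 5 != 2).
  exists (upd u 2 (u 2).+1); first by apply: ExecIf0 => //; apply: ExecSeq hu (ExecInc _ _).
  split; first by rewrite /pair_succ /=; rewrite_upd; rewrite u1 u2 E.
  by move=> i h h'; rewrite_upd; rewrite u3.
exists (upd (upd s 2 a) 5 (upd s 2 a 5).+1); first by apply: ExecIfS; rewrite E //; exact: ExecInc.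
by split; [rewrite /pair_succ /= | move=> i h h']; rewrite_upd.
Qed.

Definition cunpair := CWhile 0 cpair_succ.

Lemma cunpair_spec s : exists2 t, exec cunpair s t &
  [/\ t 0 = 0, (t 2, t 5) = iter (s 0) pair_succ (s 2, s 5)
    & forall i, i != 0 -> i != 2 -> i != 5 -> t i = s i].
Proof.
move Hn: (s 0) => n; elim: n s Hn => [|n IH] s hs; first by exists s; [exact: ExecWhile0 |].
have [s1 h1 [e1 e2]] := cpair_succ_spec (upd s 0 n).
have hw : s1 0 = n by rewrite e2 //; rewrite_upd.
have [t ht [t1 t2 t3]] := IH s1 hw.
exists t; first by apply: ExecWhileS ht; rewrite hs.
split => //; first by rewrite t2 e1 iterSr; rewrite_upd.
by move=> i h h' h''; rewrite t3 // e2 //; rewrite_upd.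
Qed.

Lemma cunpair_init a b : exists2 t, exec cunpair (init (pairn a b)) t &
  [/\ t 0 = 0, t 2 = a, t 5 = b & forall i, i != 0 -> i != 2 -> i != 5 -> t i = 0].
Proof.
have [t h [t0 t25 t3]] := cunpair_spec (init (pairn a b)).
move: t25; rewrite /init /= (iter_pair_succ (erefl (pairn a b))) => -[e2 e5].
by exists t => //; split => // i h1 h2 h3; rewrite t3 // /init (negbTE h1).
Qed.

Definition chalve x r f := CWhile x (CIf x (CInc f) (CInc r)).

Lemma chalve_spec x r f s : x != r -> x != f -> r != f ->
  exists2 t, exec (chalve x r f) s t &
  [/\ t x = 0, t r = s r + (s x)./2, t f = s f + odd (s x)
    & forall i, i != x -> i != r -> i != f -> t i = s i].
Proof.
move=> n1 n2 n3; move Hn: (s x) => n; elim/ltn_ind: n s Hn => n IH s hs.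
case: n IH hs => [|[|m]] IH hs.
- by exists s; [exact: ExecWhile0 | rewrite !addn0].
- set s0 := upd s x 0; set s1 := upd s0 f (s0 f).+1.
  exists s1.
    apply: ExecWhileS; rewrite ?hs //; last by apply: ExecWhile0; rewrite /s1 /s0; rewrite_upd.
    by apply: ExecIf0; [rewrite /s0; rewrite_upd | exact: ExecInc].
  split; try by rewrite /s1 /s0; rewrite_upd; rewrite ?addn0 ?addn1.
  by move=> i h h' h''; rewrite /s1 /s0; rewrite_upd.
- set s0 := upd s x m.+1; set s1 := upd s0 x m; set s2 := upd s1 r (s1 r).+1.
  have hw : s2 x = m by rewrite /s2 /s1 /s0; rewrite_upd.
  have [t ht [t1 t2 t3 t4]] := IH m (ltnW (ltnSn m.+1)) s2 hw.
  exists t.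
    apply: ExecWhileS ht; rewrite hs //; apply: ExecIfS; first by rewrite /s0; rewrite_upd.
    by rewrite /s0 upd_eq /=; exact: ExecInc.
  split => //; first by rewrite t2 /s2 /s1 /s0; rewrite_upd; rewrite /=; lia.
    by rewrite t3 /s2 /s1 /s0; rewrite_upd; rewrite /= negbK.
  by move=> i h h' h''; rewrite t4 // /s2 /s1 /s0; rewrite_upd.
Qed.

Lemma chalve_cons x r f s b p : x != r -> x != f -> r != f ->
  s x = enc (b :: p) -> s r = 0 -> s f = 0 ->
  exists2 t, exec (chalve x r f) (upd s x (s x).-1) t &
  [/\ t x = 0, t r = enc p, t f = b & forall i, i != x -> i != r -> i != f -> t i = s i].
Proof.
move=> n1 n2 n3 hx hr hf.
have [t ht [t1 t2 t3 t4]] := chalve_spec (upd s x (s x).-1) n1 n2 n3.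
exists t => //; rewrite t2 t3 upd_eq hx enc_cons_pred; rewrite_upd.
rewrite hr hf !add0n half_bit_double oddD odd_double addbF.
by split => //; [case: b hx | move=> i h h' h''; rewrite t4 //; rewrite_upd].
Qed.

Definition cassert0 r := CWhile r (CInc r).

Lemma exec_cassert0 r s t : exec (cassert0 r) s t -> s r = 0 /\ t = s.
Proof.
move=> H; remember (cassert0 r) as c eqn:Ec; elim: H Ec => //.
- by move=> r' c0 s0 h [<- _].
- move=> r' c0 s0 u t0 h hb _ _ IH [e1 e2]; subst.
  have [+ _] := IH erefl; move: hb => /exec_inc_inv ->; rewrite upd_eq; lia.
Qed.

Definition cdiverge d := CSeq (CInc d) (cassert0 d).

Lemma exec_cdiverge d s t : ~ exec (cdiverge d) s t.
Proof. by case/exec_seq_inv=> u /exec_inc_inv -> /exec_cassert0 []; rewrite upd_eq. Qed.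

(** * Auxiliary computable functions *)

Definition outputs c s m := exists2 t, exec c s t & t 0 = m.

Lemma outputs_exec c s t m : exec c s t -> outputs c s m <-> m = t 0.
Proof. by move=> h; split=> [[t' /(exec_det h) <- <-] // | ->]; exists t. Qed.

Lemma outputs_seq c1 c2 s u m : exec c1 s u -> outputs (CSeq c1 c2) s m <-> outputs c2 u m.
Proof.
move=> h; split; last by case=> t ht <-; exists t => //; exact: ExecSeq h ht.
by case=> t /exec_seq_inv[u' /(exec_det h) <- ht] <-; exists t.
Qed.

Lemma outputs_call_seq P m k c s n : outputs (CSeq (CCall P m k) c) s n <->
  exists2 u, terminates P (window m k s) u & outputs c (embed m k s u) n.
Proof.
split; first by case=> t /exec_seq_inv[u' /exec_call_inv[u hu ->] ht] <-; exists u => //; exists t.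
by case=> u hu [t ht <-]; exists t => //; apply: ExecSeq ht; exact: ExecCall.
Qed.

Lemma outputs_while_step r c k s u m : s r <> 0 -> exec c (upd s r (s r).-1) u ->
  outputs (CSeq (CWhile r c) k) s m <-> outputs (CSeq (CWhile r c) k) u m.
Proof.
move=> hr hc; split.
  case=> t /exec_seq_inv[v /exec_while_inv[[/hr]//|[_ [u' /(exec_det hc) <- hw]]] hk] <-.
  by exists t => //; exact: ExecSeq hw hk.
case=> t /exec_seq_inv[v hw hk] <-; exists t => //.
by apply: ExecSeq hk; exact: ExecWhileS hc hw.
Qed.

Lemma computable1_of c (f : seq bool -> option (seq bool)) : wf c ->
  (forall x y, f x = Some y <-> outputs c (init (enc x)) (enc y)) -> computable1 f.
Proof. by move=> w H; exists (compile c 0) => x y; rewrite H compile_halts. Qed.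

Lemma computable2_of c (f : seq bool -> seq bool -> option (seq bool)) : wf c ->
  (forall p x y, f p x = Some y <-> outputs c (init (pairn (enc p) (enc x))) (enc y)) ->
  computable2 f.
Proof. by move=> w H; exists (compile c 0) => p x y; rewrite H compile_halts. Qed.

Definition cfst := CSeq cunpair (cmove 2 0).

Lemma computable_fst : computable2 (fun q (_ : seq bool) => Some q).
Proof.
apply: (computable2_of (c := cfst)) => // p x y.
have [u hu [u0 u2 _ _]] := cunpair_init (enc p) (enc x).
have [t ht [_ t0 _]] := cmove_spec u (isT : 2 != 0).
rewrite (outputs_exec _ (ExecSeq hu ht)) t0 u0 u2.
by split=> [[->] | /enc_inj ->].
Qed.

Definition cprepare := CSeq cunpair (cmove 2 3).

Lemma cprepare_spec a b : exists2 s, exec cprepare (init (pairn a b)) s &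
  [/\ s 3 = a, s 5 = b & forall i, i != 3 -> i != 5 -> s i = 0].
Proof.
have [u hu [u0 u2 u5 u6]] := cunpair_init a b.
have [t ht [t2 t3 t4]] := cmove_spec u (isT : 2 != 3).
exists t; first exact: ExecSeq hu ht.
split; [by rewrite t3 u2 (u6 3) | by rewrite t4 | move=> i h3 h5].
have [->|h2] := eqVneq i 2; first exact: t2.
by rewrite t4 //; have [->|h0] := eqVneq i 0; [exact: u0 | exact: u6].
Qed.

Definition cpairn := CSeq (cmove 3 8) (CSeq (cmove2 5 8 4) (ctri 8 4 11)).

Lemma cpairn_spec s : s 8 = 0 -> s 4 = 0 -> s 11 = 0 -> exists2 t, exec cpairn s t &
  t 4 = pairn (s 3) (s 5) /\
  forall i, i != 3 -> i != 8 -> i != 5 -> i != 4 -> i != 11 -> t i = s i.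
Proof.
move=> z8 z4 z11.
have [s1 h1 [a1 a2 a3]] := cmove_spec s (isT : 3 != 8).
have [s2 h2 [b1 b2 b3 b4]] := cmove2_spec s1 (isT : 5 != 8) (isT : 5 != 4) (isT : 8 != 4).
have z : s2 11 = 0 by rewrite b4 // a3.
have [t ht [c1 c2 c3 c4]] := ctri_spec (isT : 8 != 4) (isT : 8 != 11) (isT : 4 != 11) z.
exists t; first exact: ExecSeq h1 (ExecSeq h2 ht).
split; first by rewrite c2 b2 b3 a2 z8 (a3 4) // (a3 5) // z4 pairnE !add0n addnC.
by move=> i n3 n8 n5 n4 n11; rewrite c4 // b4 // a3.
Qed.

(* [PV] runs on the registers [3 * i + 3], [PN] on the registers [3 * i + 4];
   the other registers used (0, 2, 5, 8, 11) lie outside both windows. *)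
Definition ccompose PV PN :=
  CSeq cprepare (CSeq (CCall PV 3 3) (CSeq cpairn (CSeq (CCall PN 3 4) (cmove 4 0)))).

Lemma cpairn_after_call s u b : (forall i, i != 3 -> i != 5 -> s i = 0) -> s 5 = b ->
  exists2 t, exec cpairn (embed 3 3 s u) t & t 0 = 0 /\ window 3 4 t = init (pairn (u 0) b).
Proof.
move=> s0 s5; set s3 := embed 3 3 s u.
have out j : j != 3 -> j != 5 -> ~~ ((3 <= j) && ((j - 3) %% 3 == 0)) -> s3 j = 0.
  by move=> ? ? hj; rewrite /s3 embed_out // s0.
have [t ht [t4 t']] := cpairn_spec (out 8 isT isT isT) (out 4 isT isT isT) (out 11 isT isT isT).
exists t => //; split; first by rewrite t' // out.
apply: functional_extensionality => -[|i]; rewrite /window /init /=.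
  by rewrite t4 /s3 (embed_at _ _ _ 0) // embed_out // s5.
by rewrite t' ?out //; lia.
Qed.

Lemma ccompose_output PV PN a b m :
  outputs (ccompose PV PN) (init (pairn a b)) m <->
  exists2 n, halts_with PV a n & halts_with PN (pairn n b) m.
Proof.
have [s2 h2 [s23 s25 s20]] := cprepare_spec a b.
have win : window 3 3 s2 = init a.
  apply: functional_extensionality => -[|i]; rewrite /window /init /= ?s23 // s20 //; lia.
have fin s6 w : s6 0 = 0 -> outputs (cmove 4 0) (embed 3 4 s6 w) m <-> m = w 0.
  move=> z0; have [t ht [_ t0 _]] := cmove_spec (embed 3 4 s6 w) (isT : 4 != 0).
  by rewrite (outputs_exec _ ht) t0 (embed_at _ _ _ 0) // embed_out // z0.
rewrite /ccompose (outputs_seq _ _ h2); split.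
- case/outputs_call_seq=> u hu; have [s6 h6 [z0 w2]] := cpairn_after_call u s20 s25.
  case/(outputs_seq _ _ h6)/outputs_call_seq=> w hw /(fin _ _ z0) ->.
  by exists (u 0); apply/halts_withE; [exists u; rewrite -?win | exists w; rewrite -?w2].
- case=> n /halts_withE[u hu <-] /halts_withE[w hw wm].
  have [s6 h6 [z0 w2]] := cpairn_after_call u s20 s25.
  apply/outputs_call_seq; exists u; rewrite ?win //.
  apply/(outputs_seq _ _ h6)/outputs_call_seq; exists w; rewrite ?w2 //.
  by apply/(fin _ _ z0).
Qed.

Definition run_desc (V : seq bool -> option (seq bool))
    (num : seq bool -> seq bool -> option (seq bool)) (r y : seq bool) :=
  if V r is Some q then num q y else None.

Lemma computable_run_desc V num :
  computable1 V -> computable2 num -> computable2 (run_desc V num).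
Proof.
case=> PV hV [PN hN]; apply: (computable2_of (c := ccompose PV PN)) => // r x y.
rewrite ccompose_output /run_desc; split.
  by case E: (V r) => [q|] // hq; exists (enc q); [exact/hV | exact/hN].
by case=> n; rewrite -(decK n) => /hV -> /hN.
Qed.

Lemma prefix_free_run_desc V num : prefix_free1 V -> prefix_free2 (run_desc V num).
Proof.
move=> pf x p p'; rewrite /run_desc.
by case E: (V p) => [q|] // _; case E': (V p') => [q'|] // _; apply: pf; rewrite ?E ?E'.
Qed.

Definition cunary_step := CIf 5 (cassert0 4) (CSeq (CInc 3) (CSeq (cmove 4 0) (CInc 2))).
Definition cunary_body := CIf 0 (cdiverge 6) (CSeq (chalve 0 4 5) cunary_step).

Lemma cunary_body_false s : s 0 = enc [:: false] -> s 4 = 0 -> s 5 = 0 -> s 2 = 0 ->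
  exists2 u, exec cunary_body s u & [/\ u 2 = 0, u 0 = 0 & u 3 = s 3].
Proof.
move=> h0 h4 h5 h2.
have [t ht [t0 t4 t5 t6]] := chalve_cons (isT : 0 != 4) (isT : 0 != 5) (isT : 4 != 5) h0 h4 h5.
exists t; last by split => //; rewrite t6.
apply: ExecIfS; first by rewrite h0.
by apply: ExecSeq ht _; apply: ExecIf0 => //; exact: ExecWhile0.
Qed.

Lemma cunary_body_true s p : s 0 = enc (true :: p) -> s 4 = 0 -> s 5 = 0 -> s 2 = 0 ->
  exists2 u, exec cunary_body s u & [/\ u 2 = 1, u 0 = enc p, u 4 = 0, u 5 = 0 & u 3 = (s 3).+1].
Proof.
move=> h0 h4 h5 h2.
have [t ht [t0 t4 t5 t6]] := chalve_cons (isT : 0 != 4) (isT : 0 != 5) (isT : 4 != 5) h0 h4 h5.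
set v1 := upd (upd t 5 (t 5).-1) 3 (upd t 5 (t 5).-1 3).+1.
have [v2 hv [a4 a0 a]] := cmove_spec v1 (isT : 4 != 0).
exists (upd v2 2 (v2 2).+1).
  apply: ExecIfS; first by rewrite h0 /=; lia.
  apply: ExecSeq ht _; apply: ExecIfS; first by rewrite t5.
  by apply: ExecSeq (ExecInc _ _) _; apply: ExecSeq hv (ExecInc _ _).
rewrite_upd; rewrite a0 a4 !a // /v1; rewrite_upd.
by rewrite t0 t4 t5 !t6 // h2.
Qed.

Lemma cunary_body_inv s p u : s 0 = enc p -> s 4 = 0 -> s 5 = 0 -> exec cunary_body s u ->
  p = [:: false] \/ exists p', p = true :: p'.
Proof.
move=> h0 h4 h5 /exec_if_inv[[_ /exec_cdiverge] //|[ne]].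
case: p h0 ne => [-> //|[] p'] h0 ne; first by right; exists p'.
have [t ht [_ t4 t5 _]] := chalve_cons (isT : 0 != 4) (isT : 0 != 5) (isT : 4 != 5) h0 h4 h5.
case/exec_seq_inv=> t' /(exec_det ht) <- /exec_if_inv[[_ /exec_cassert0[e _]]|[]].
  by left; move: e; rewrite t4 => /enc_eq0 ->.
by rewrite t5.
Qed.

Definition cunary_loop := CSeq (CWhile 2 cunary_body) (cmove 3 0).

Lemma cunary_loop_inv p s m : s 2 = 1 -> s 0 = enc p -> s 4 = 0 -> s 5 = 0 ->
  outputs cunary_loop s m -> p = [:: false] \/ exists p', p = true :: p'.
Proof.
move=> h2 h0 h4 h5 [t /exec_seq_inv[v /exec_while_inv[[e _]|[_ [u hb _]]] _] _].
  by rewrite h2 in e.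
by apply: cunary_body_inv hb; rewrite ?h2; rewrite_upd.
Qed.

Lemma cunary_loop_output p s m : s 2 = 1 -> s 0 = enc p -> s 4 = 0 -> s 5 = 0 ->
  outputs cunary_loop s m <-> exists2 n, p = nseq n true ++ [:: false] & m = s 3 + n.
Proof.
elim: p s m => [|b p IH] s m h2 h0 h4 h5.
  by split=> [/(cunary_loop_inv h2 h0 h4 h5)[|[]] | [[]]].
have hr : s 2 <> 0 by rewrite h2.
have [s'0 s'2 s'3 s'4 s'5] : let s' := upd s 2 (s 2).-1 in
    [/\ s' 0 = enc (b :: p), s' 2 = 0, s' 3 = s 3, s' 4 = 0 & s' 5 = 0].
  by rewrite /= h2; rewrite_upd.
case: b h0 s'0 => h0 s'0.
  have [u hu [u2 u0 u4 u5 u3]] := cunary_body_true s'0 s'4 s'5 s'2.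
  rewrite (outputs_while_step _ _ hr hu) IH // u3 s'3.
  split=> [[n -> ->] | [[|n] //= [->] ->]]; last by exists n; rewrite ?addSnnS.
  by exists n.+1; rewrite ?addSnnS.
case: p IH h0 s'0 => [|b p] _ h0 s'0; last first.
  by split=> [/(cunary_loop_inv h2 h0 h4 h5)[|[]] | [[|[]]]].
have [u hu [u2 u0 u3]] := cunary_body_false s'0 s'4 s'5 s'2.
have [t ht [_ t0 _]] := cmove_spec u (isT : 3 != 0).
rewrite (outputs_while_step _ _ hr hu) (outputs_seq _ _ (ExecWhile0 _ u2)) (outputs_exec _ ht).
by rewrite t0 u0 u3 s'3; split=> [-> | [[|n] // _ ->]]; [exists 0; rewrite ?addn0 | rewrite addn0].
Qed.

Definition cunary := CSeq (CInc 2) cunary_loop.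

Definition unary_dec (p : seq bool) : option (seq bool) :=
  if p == nseq (size p).-1 true ++ [:: false] then Some (dec (size p).-1) else None.

Lemma unary_decP p q : unary_dec p = Some q <-> p = nseq (enc q) true ++ [:: false].
Proof.
rewrite /unary_dec; split; first by case: eqP => // e [<-]; rewrite decK.
by move=> ->; rewrite size_cat size_nseq addn1 /= eqxx encK.
Qed.

Lemma computable_unary_dec : computable1 unary_dec.
Proof.
apply: (computable1_of (c := cunary)) => // p q.
rewrite unary_decP (outputs_seq _ _ (ExecInc 2 _)) cunary_loop_output //.
by split=> [-> | [n -> ->]]; [exists (enc q) | rewrite /upd /=].
Qed.

Lemma prefix_unary n n' :
  prefix (nseq n true ++ [:: false]) (nseq n' true ++ [:: false]) -> n = n'.
Proof. by elim: n n' => [|n IH] [|n'] //= /IH ->. Qed.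

Lemma prefix_free_unary_dec : prefix_free1 unary_dec.
Proof.
move=> p p'; rewrite /unary_dec.
by case: eqP => // -> _; case: eqP => // -> _ /prefix_unary ->.
Qed.

Definition csize := CWhile 3 (CSeq (chalve 3 4 6) (CSeq (cmove 4 3) (CInc 7))).

Lemma csize_spec p s : s 3 = enc p -> s 4 = 0 ->
  exists2 t, exec csize s t & [/\ t 7 = s 7 + size p, t 0 = s 0 & t 5 = s 5].
Proof.
elim: p s => [|b p IH] s h3 h4; first by exists s; [exact: ExecWhile0 | rewrite addn0].
set s0 := upd s 3 (s 3).-1.
have [u hu [u3 u4 u6 uo]] := chalve_spec s0 (isT : 3 != 4) (isT : 3 != 6) (isT : 4 != 6).
have [v hv [v4 v3 vo]] := cmove_spec u (isT : 4 != 3).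
set w := upd v 7 (v 7).+1.
have w3 : w 3 = enc p.
  rewrite /w; rewrite_upd; rewrite v3 u3 u4 /s0; rewrite_upd.
  by rewrite h4 add0n h3 enc_cons_pred half_bit_double.
have w4 : w 4 = 0 by rewrite /w; rewrite_upd.
have [t ht [t7 t0 t5]] := IH w w3 w4.
exists t.
  apply: ExecWhileS ht; last exact: ExecSeq hu (ExecSeq hv (ExecInc _ _)).
  by rewrite h3 /=; case: (b); lia.
rewrite t7 t0 t5 /w; rewrite_upd; rewrite !vo // !uo // /s0; rewrite_upd.
by split => //=; lia.
Qed.

Definition csub := CWhile 7 (CIf 5 (cdiverge 8) (CInc 9)).

Lemma csub_run n s : s 7 = n -> n <= s 5 ->
  exists2 t, exec csub s t & t 5 = s 5 - n /\ t 0 = s 0.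
Proof.
elim: n s => [|n IH] s h7 le; first by exists s; [exact: ExecWhile0 | rewrite subn0].
set s1 := upd (upd s 7 n) 5 (upd s 7 n 5).-1; set s2 := upd s1 9 (s1 9).+1.
have h7' : s2 7 = n by rewrite /s2 /s1; rewrite_upd.
have le' : n <= s2 5 by rewrite /s2 /s1; rewrite_upd; lia.
have [t ht [t5 t0]] := IH s2 h7' le'.
exists t.
  apply: ExecWhileS ht; rewrite h7 //=; apply: ExecIfS; last exact: ExecInc.
  by rewrite_upd; lia.
by rewrite t5 t0 /s2 /s1; rewrite_upd; split => //; lia.
Qed.

Lemma csub_inv n s t : s 7 = n -> exec csub s t -> [/\ n <= s 5, t 5 = s 5 - n & t 0 = s 0].
Proof.
elim: n s t => [|n IH] s t h7 /exec_while_inv[[e ->]|[ne [u hb hw]]].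
- by rewrite subn0.
- by rewrite h7 in ne.
- by rewrite h7 in e.
move: hb; rewrite h7 /= => /exec_if_inv[[_ /exec_cdiverge]//|[ne5 /exec_inc_inv eu]].
subst u; have := IH _ _ _ hw; rewrite /upd /= => /(_ erefl) [l e5 e0].
by move: ne5; rewrite /upd /= => ne5; rewrite e5 e0; split => //; lia.
Qed.

Definition clength := CSeq cunpair (CSeq (cmove2 2 0 3) (CSeq csize (CSeq csub (cassert0 5)))).

Lemma clength_output p b m :
  outputs clength (init (pairn (enc p) b)) m <-> m = enc p /\ size p = b.
Proof.
have [u hu [u0 u2 u5 u6]] := cunpair_init (enc p) b.
have [v hv [v2 v0 v3 v6]] := cmove2_spec u (isT : 2 != 0) (isT : 2 != 3) (isT : 0 != 3).
have v3' : v 3 = enc p by rewrite v3 u2 u6.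
have [w hw [w7 w0 w5]] := csize_spec v3' (ltac:(by rewrite v6 // u6) : v 4 = 0).
rewrite v6 ?u6 // in w7; rewrite v0 u0 u2 in w0; rewrite v6 // u5 in w5.
rewrite /clength (outputs_seq _ _ hu) (outputs_seq _ _ hv) (outputs_seq _ _ hw); split.
  case=> t /exec_seq_inv[x /(csub_inv w7)[l x5 x0] /exec_cassert0[e ->]] <-.
  by split; [rewrite x0 w0 | move: e; rewrite x5 w5; lia].
case=> -> eb; have [x hx [x5 x0]] := csub_run w7 (ltac:(lia) : size p <= w 5).
by exists x; [apply: ExecSeq hx (ExecWhile0 _ _); rewrite x5 w5 eb subnn | rewrite x0 w0].
Qed.

Definition id_of_length (p y : seq bool) : option (seq bool) :=
  if size p == enc y then Some p else None.

Lemma computable_id_of_length : computable2 id_of_length.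
Proof.
apply: (computable2_of (c := clength)) => // p x y; rewrite clength_output /id_of_length.
case: eqP => e; split => //; first by case=> <-.
  by case=> /enc_inj ->.
by case=> _ /e.
Qed.

Lemma prefix_free_id_of_length : prefix_free2 id_of_length.
Proof.
move=> x p p'; rewrite /id_of_length.
by case: eqP => // e _; case: eqP => // e' _; rewrite prefixE e -e' take_size => /eqP.
Qed.

(** * Kraft's inequality *)

Fixpoint strings n : seq (seq bool) :=
  if n is n'.+1 then map (cons false) (strings n') ++ map (cons true) (strings n')
  else [:: [::]].

Fixpoint strings_upto n : seq (seq bool) :=
  if n is n'.+1 then strings_upto n' ++ strings n else strings 0.

Lemma size_strings n : size (strings n) = 2 ^ n.
Proof. by elim: n => //= n IH; rewrite size_cat !size_map IH expnS mul2n addnn. Qed.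

Lemma mem_strings n r : (r \in strings n) = (size r == n).
Proof.
elim: n r => [|n IH] [|b r] //=; rewrite mem_cat.
  by apply/negbTE; rewrite negb_or; apply/andP; split; apply/mapP => -[].
have memc (c : bool) : (b :: r \in map (cons c) (strings n)) = (b == c) && (size r == n).
  by rewrite -IH; apply/mapP/andP => [[x hx [-> ->]] | [/eqP -> h]]; [rewrite eqxx | exists r].
by rewrite !memc eqSS; case: (b); rewrite /= ?orbF.
Qed.

Lemma uniq_strings n : uniq (strings n).
Proof.
elim: n => //= n IH; have inj b : injective (cons b : seq bool -> _) by move=> x y [].
rewrite cat_uniq (map_inj_uniq (inj false)) (map_inj_uniq (inj true)) IH /= andbT.
by apply/hasPn => _ /mapP[r _ ->]; apply/mapP => -[].
Qed.

Lemma mem_strings_upto n r : (r \in strings_upto n) = (size r <= n).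
Proof.
elim: n => [|n IH]; first by case: r.
rewrite (_ : strings_upto n.+1 = strings_upto n ++ strings n.+1) //.
by rewrite mem_cat IH mem_strings orbC -ltnS -leq_eqVlt.
Qed.

(* [kraft_sum S n] is the sum of [2 ^ (n - size r)] over the [r] in [S] with [size r <= n]. *)
Fixpoint kraft_sum (S : pred (seq bool)) n : nat :=
  if n is n'.+1 then (kraft_sum S n').*2 + count S (strings n) else count S (strings 0).

Definition prefix_free_pred (S : pred (seq bool)) :=
  forall p p', S p -> S p' -> prefix p p' -> p = p'.

Lemma kraft_sumS S n : kraft_sum S n.+1 = (kraft_sum S n).*2 + count S (strings n.+1).
Proof. by []. Qed.

Lemma count_strings_cons S n : count S (strings n.+1) =
  count (S \o cons false) (strings n) + count (S \o cons true) (strings n).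
Proof. by rewrite /= count_cat !count_map. Qed.

Lemma kraft_sum_cons S n : ~~ S [::] ->
  kraft_sum S n.+1 = kraft_sum (S \o cons false) n + kraft_sum (S \o cons true) n.
Proof.
move=> h; elim: n => [|n IH]; first by rewrite /= (negbTE h) /= !addn0.
by rewrite kraft_sumS IH count_strings_cons !kraft_sumS doubleD; lia.
Qed.

Lemma kraft_sum_nil S n : prefix_free_pred S -> S [::] -> kraft_sum S n = 2 ^ n.
Proof.
move=> pf h; elim: n => [|n IH]; first by rewrite /= h.
have none b : count (S \o cons b) (strings n) = 0.
  apply/eqP; rewrite -leqn0 leqNgt -has_count; apply/hasPn => x _.
  by apply/negP => /(pf _ _ h)/(_ (prefix0s _))/eqP.
by rewrite kraft_sumS count_strings_cons !none IH expnS mul2n !addn0.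
Qed.

Lemma prefix_free_cons S b : prefix_free_pred S -> prefix_free_pred (S \o cons b).
Proof. by move=> pf p p' h h' hp; have := pf _ _ h h'; rewrite /= eqxx => /(_ hp) []. Qed.

Lemma kraft_sum_le S n : prefix_free_pred S -> kraft_sum S n <= 2 ^ n.
Proof.
elim: n S => [|n IH] S pf; first by rewrite /=; case: (S [::]).
case h: (S [::]); first by rewrite kraft_sum_nil.
rewrite kraft_sum_cons ?h // expnS mul2n -addnn.
by apply: leq_add; apply: IH; exact: prefix_free_cons.
Qed.

Lemma count_strings_upto_le_kraft_sum S n : count S (strings_upto n) <= kraft_sum S n.
Proof. by elim: n => //= n IH; rewrite count_cat -addnn; lia. Qed.

Lemma kraft_sum_lower S e : (forall k, 2 ^ k <= count S (strings_upto (k + e))) ->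
  forall k, (count S (strings_upto (e + k))).*2 + k * 2 ^ k <= (kraft_sum S (e + k)).*2.
Proof.
move=> H; elim=> [|k IH].
  by rewrite addn0 mul0n addn0 leq_double count_strings_upto_le_kraft_sum.
have hk := H k; rewrite addnC in hk.
rewrite addnS /= count_cat expnS.
move: IH hk; set A := count S _; set W := kraft_sum S _; set c := count S _; set X := 2 ^ k.
by rewrite -!mul2n; nia.
Qed.

Lemma prefix_free_sparse S e : prefix_free_pred S ->
  ~ (forall k, 2 ^ k <= count S (strings_upto (k + e))).
Proof.
move=> pf H; set k := (2 * 2 ^ e).+1.
have := kraft_sum_lower H k; have := kraft_sum_le (e + k) pf.
rewrite -!mul2n expnD => kr g.
have : k * 2 ^ k <= 2 * 2 ^ e * 2 ^ k by lia.
by rewrite leq_pmul2r ?expn_gt0 // ltnn.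
Qed.

Lemma count_strings_upto_image S (g : seq bool -> option (seq bool)) n m :
  (forall x, size x = n -> exists2 r, S r && (size r <= m) & g r = Some x) ->
  2 ^ n <= count S (strings_upto m).
Proof.
move=> H; rewrite -size_strings -size_filter.
apply: (@leq_trans (size (pmap g (filter S (strings_upto m))))); last first.
  by rewrite size_pmap count_size.
apply: uniq_leq_size (uniq_strings n) _ => x; rewrite mem_strings => /eqP /H [r /andP[hS hr] hg].
by rewrite mem_pmap; apply/mapP; exists r; rewrite // mem_filter hS mem_strings_upto.
Qed.

(** * Prefix complexity *)

Lemma ex_least (P : nat -> Prop) : (exists n, P n) -> exists n, P n /\ forall m, P m -> n <= m.
Proof.
case=> n; elim/ltn_ind: n => n IH hn.
have [[m lt hm]|nh] := classic (exists2 m, m < n & P m); first exact: IH lt hm.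
by exists n; split => // m hm; rewrite leqNgt; apply/negP => lt; apply: nh; exists m.
Qed.

Lemma minP_spec (P : nat -> Prop) n : P n -> P (minP P) /\ forall m, P m -> minP P <= m.
Proof.
move=> hn; have /ex_least ex : exists n, P n by exists n.
exact: (epsilon_spec (inhabits 0) _ ex).
Qed.

Lemma KPc_le_size U x y p : U p y = Some x -> KPc U x y <= size p.
Proof. by move=> h; rewrite /KPc; apply: (proj2 (minP_spec (n := size p) _)); exists p. Qed.

Lemma KPu_witness V q : (exists r, V r = Some q) -> exists2 r, V r = Some q & size r = KPu V q.
Proof.
case=> r hr; rewrite /KPu.
have [[r' [<- h]] _] := minP_spec (P := fun n => exists r, size r = n /\ V r = Some q)
  (ex_intro _ r (conj erefl hr)).
by exists r'.
Qed.

Lemma KPprog_witness V num x y : (forall q, exists r, V r = Some q) ->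
  (exists q, num q y = Some x) ->
  exists2 r, run_desc V num r y = Some x & size r = KPprog V num x y.
Proof.
move=> surjV [q hq]; rewrite /KPprog.
have [[q' [hq' <-]] _] := minP_spec (P := fun n => exists q, num q y = Some x /\ KPu V q = n)
  (ex_intro _ q (conj hq erefl)).
by have [r hr <-] := KPu_witness (surjV q'); exists r => //; rewrite /run_desc hr.
Qed.

Lemma optimal1_surj V : optimal1 V -> forall q, exists r, V r = Some q.
Proof.
case=> _ _ /(_ _ computable_unary_dec prefix_free_unary_dec)[c hc] q.
by have [r [hr _]] := hc _ _ (proj2 (unary_decP _ q) erefl); exists r.
Qed.

Lemma goedel_numbering_surj num : goedel_numbering num -> forall x y, exists q, num q y = Some x.
Proof. by case=> _ /(_ _ computable_fst)[t [_ ht]] x y; exists (t x); rewrite ht. Qed.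

Lemma KPc_le_KPprog U V num : optimal2 U -> optimal1 V -> goedel_numbering num ->
  exists c, forall x y, KPc U x y <= KPprog V num x y + c.
Proof.
case=> _ _ optU oV gN; have [cV pfV _] := oV; have [cN _] := gN.
have [c hc] := optU _ (computable_run_desc cV cN) (@prefix_free_run_desc V num pfV).
exists c => x y; have [r hr <-] := KPprog_witness (optimal1_surj oV) (goedel_numbering_surj gN x y).
by have [p [hp sp]] := hc _ _ _ hr; exact: leq_trans (KPc_le_size hp) sp.
Qed.

Lemma KPprog_KPc_unbounded U V num : optimal2 U -> optimal1 V -> goedel_numbering num ->
  forall d, exists x y, KPc U x y + d < KPprog V num x y.
Proof.
case=> _ _ optU oV gN d; have [_ pfV _] := oV.
have [c hc] := optU _ computable_id_of_length prefix_free_id_of_length.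
apply: NNPP => nH; have le x y : KPprog V num x y <= KPc U x y + d.
  by rewrite leqNgt; apply/negP => lt; apply: nH; exists x, y.
have pfS : prefix_free_pred [pred r | V r != None].
  by move=> p p' hp hp'; apply: pfV; apply/eqP.
apply: (prefix_free_sparse pfS (e := c + d)) => n.
apply: (count_strings_upto_image (g := fun r => run_desc V num r (dec n))) => x sx.
have hx : id_of_length x (dec n) = Some x by rewrite /id_of_length decK sx eqxx.
have [p [hp sp]] := hc _ _ _ hx.
have [r hr sr] := KPprog_witness (optimal1_surj oV) (goedel_numbering_surj gN x (dec n)).
exists r => //; apply/andP; split; first by move: hr; rewrite /run_desc inE; case: (V r).
by have := KPc_le_size hp; have := le x (dec n); rewrite sr sx in sp *; lia.
Qed.

Theorem proposition4 :
  forall (U : seq bool -> seq bool -> option (seq bool))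
         (V : seq bool -> option (seq bool))
         (num : seq bool -> seq bool -> option (seq bool)),
    optimal2 U -> optimal1 V -> goedel_numbering num ->
    (exists c, forall x y, KPc U x y <= KPprog V num x y + c) /\
    (forall d, exists x y, KPc U x y + d < KPprog V num x y).
Proof.
move=> U V num oU oV gN.
by split; [exact: KPc_le_KPprog | exact: KPprog_KPc_unbounded].
Qed.
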